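(* Let $G$ be a connected weighted multigraph on the vertex set $V$, $|V|=n\ge2$, with positive edge weights and Laplacian matrix $L$, and let $d^r$ be the resistance distance on $V$. Then for all distinct $i,j\in V$, $$d^r(i,j)=n^{-1}\bigl((L_{jj})^{-1}_i+(L_{ii})^{-1}_j\bigr)\mathbf 1,$$ where $\mathbf 1$ is the vector of $n-1$ ones and $(L_{jj})^{-1}_i$ is the row indexed by $i$ of the inverse of the principal submatrix $L_{jj}$.
   Context: Loops and multiple edges are allowed. The weighted adjacency matrix $A=(a_{ij})$ has $a_{ij}$ equal to the sum of weights of the edges joining $i$ and $j$; $L=\operatorname{diag}(A\mathbf 1)-A$. $L_{jj}$ is $L$ with row $j$ and column $j$ deleted (indexed by $V\setminus\{j\}$). The resistance distance is $d^r(i,j)=(e_i-e_j)^{\mathsf T}L^{+}(e_i-e_j)$ with $L^+$ the Moore–Penrose inverse (the effective resistance with edge conductances equal to the weights). *)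

From mathcomp Require Import all_boot all_order all_algebra.
Set Implicit Arguments. Unset Strict Implicit. Unset Printing Implicit Defensive.
Import Order.TTheory GRing.Theory Num.Theory.
Local Open Scope ring_scope.

Section Graphs.
Variable R : realFieldType.
Variable n : nat.
(* A weighted multigraph on V = 'I_n: a finite type of edges E, each edge e
   joining the (unordered) pair of endpoints [ends e] with weight [w e].
   Loops (ends e = (i,i)) and multiple edges are allowed. *)
Variable E : finType.
Variable ends : E -> 'I_n * 'I_n.
Variable w : E -> R.

Definition joins (e : E) (i j : 'I_n) : bool :=
  (ends e == (i, j)) || (ends e == (j, i)).

Definition adjmx : 'M[R]_n := \matrix_(i, j) \sum_(e | joins e i j) w e.

Definition laplacian : 'M[R]_n :=
  \matrix_(i, j) ((i == j)%:R * (\sum_k adjmx i k) - adjmx i j).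

Definition adjacent : rel 'I_n := fun i j => [exists e, joins e i j].

Definition connected_graph : Prop := forall i j : 'I_n, connect adjacent i j.

Definition pos_weights : Prop := forall e, 0 < w e.
End Graphs.

(* X is the Moore–Penrose inverse of the real matrix A (Penrose equations;
   over the reals the conjugate transpose is the transpose). *)
Definition is_MP_inverse (R : realFieldType) (n : nat) (A X : 'M[R]_n) : Prop :=
  [/\ A *m X *m A = A, X *m A *m X = X, (A *m X)^T = A *m X & (X *m A)^T = X *m A].

(* resistance distance (e_i - e_j)^T Lp (e_i - e_j), where Lp = L^+ *)
Definition resistance (R : realFieldType) (n : nat) (Lp : 'M[R]_n) (i j : 'I_n) : R :=
  let v : 'cV[R]_n := delta_mx i 0 - delta_mx j 0 in (v^T *m Lp *m v) 0 0.

(* principal submatrix with row and column j deleted, indexed by V \ {j}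
   via the order-preserving bijection [lift j] : 'I_m.+1 -> V \ {j} *)
Definition del_mx (R : ringType) (m : nat) (j : 'I_m.+2) (A : 'M[R]_m.+2) : 'M[R]_m.+1 :=
  row' j (col' j A).

Definition sub_idx (m : nat) (j i : 'I_m.+2) : 'I_m.+1 := odflt ord0 (unlift j i).

Definition rowsum (R : ringType) (m : nat) (M : 'M[R]_m) (k : 'I_m) : R :=
  \sum_l M k l.

From mathcomp Require Import all_boot all_order all_algebra.
From mathcomp Require Import ring lra.
Set Implicit Arguments. Unset Strict Implicit. Unset Printing Implicit Defensive.
Import Order.TTheory GRing.Theory Num.Theory.
Local Open Scope ring_scope.

(* Write u = e_i - e_j and n = m + 2.  The row of (L_jj)^-1 indexed by i,
   padded with a zero at j, is a potential z with z L = u.  Since u = z L lies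
   in the row space of L, u L^+ is another such potential, and for a connected
   graph with positive weights the left kernel of L consists of the constant
   vectors; hence z = u L^+ - (u L^+)_j 1.  As L^+ 1 = 0, summing the entries
   gives ((L_jj)^-1_i) 1 = -n (u L^+)_j, and exchanging i and j gives
   ((L_ii)^-1_j) 1 = n (u L^+)_i.  Adding the two yields
   n ((u L^+)_i - (u L^+)_j) = n d^r(i, j). *)

Section Laplacian.
Variables (R : realFieldType) (n : nat) (E : finType).
Variables (ends : E -> 'I_n * 'I_n) (w : E -> R).

Local Notation A := (adjmx ends w).
Local Notation L := (laplacian ends w).

Lemma adjmxC a b : A a b = A b a.
Proof. by rewrite !mxE; apply: eq_bigl => e; rewrite /joins orbC. Qed.

Lemma tr_laplacian : L^T = L.
Proof.
apply/matrixP => a b; rewrite mxE [L b a]mxE [L a b]mxE.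
case: (eqVneq a b) => [-> // | _].
by rewrite !mul0r adjmxC.
Qed.

Lemma laplacian_row_sum0 a : \sum_b L a b = 0.
Proof.
under eq_bigr do rewrite mxE.
rewrite sumrB (bigD1 a) //= eqxx mul1r [X in _ + X - _]big1 ?addr0 ?subrr // => b.
by rewrite eq_sym => /negbTE ->; rewrite mul0r.
Qed.

Lemma laplacian_mul1 : L *m const_mx 1 = 0 :> 'cV[R]_n.
Proof.
apply/matrixP => a b; rewrite !mxE -[RHS](laplacian_row_sum0 a).
by apply: eq_bigr => c _; rewrite [const_mx _ _ _]mxE mulr1.
Qed.

Lemma sum_mulmx_laplacian (y : 'rV[R]_n) : \sum_a (y *m L) 0 a = 0.
Proof.
under eq_bigr do rewrite [(_ *m _) _ _]mxE.
rewrite exchange_big /= big1 // => a _.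
by rewrite -big_distrr /= laplacian_row_sum0 mulr0.
Qed.

Lemma mulmx_laplacianE (y : 'rV[R]_n) a :
  (y *m L) 0 a = \sum_b A a b * (y 0 a - y 0 b).
Proof.
rewrite mxE; under eq_bigr do rewrite mxE mulrBr.
rewrite sumrB (bigD1 a) //= eqxx mul1r [X in _ + X - _]big1 ?addr0; last first.
  by move=> b /negbTE ->; rewrite mul0r mulr0.
under [RHS]eq_bigr do rewrite mulrBr.
rewrite sumrB -big_distrl mulrC; congr (_ - _).
by apply: eq_bigr => b _; rewrite adjmxC mulrC.
Qed.

(* Each unordered pair {a, b} contributes y_a (y_a - y_b) + y_b (y_b - y_a). *)
Lemma dirichlet_energyE (y : 'rV[R]_n) :
  \sum_a \sum_b A a b * (y 0 a - y 0 b) ^+ 2 = 2 * \sum_a y 0 a * (y *m L) 0 a.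
Proof.
have split_sq a b : A a b * (y 0 a - y 0 b) ^+ 2 =
    y 0 a * (A a b * (y 0 a - y 0 b)) + y 0 b * (A b a * (y 0 b - y 0 a)).
  by rewrite adjmxC; ring.
under eq_bigr do under eq_bigr do rewrite split_sq.
under eq_bigr do rewrite big_split -big_distrr -mulmx_laplacianE.
rewrite big_split exchange_big /= mulr2n mulrDl mul1r; congr (_ + _).
by apply: eq_bigr => b _; rewrite -big_distrr -mulmx_laplacianE.
Qed.

Hypothesis w_gt0 : pos_weights w.

Lemma adjmx_ge0 a b : 0 <= A a b.
Proof. by rewrite mxE; apply: sumr_ge0 => e _; apply: ltW. Qed.

Lemma adjmx_gt0 a b : adjacent ends a b -> 0 < A a b.
Proof.
move=> /existsP [e joins_e]; rewrite mxE (bigD1 e) //=.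
by rewrite ltr_pwDl // sumr_ge0 // => f _; apply: ltW.
Qed.

Hypothesis G_connected : connected_graph ends.

Lemma laplacian_left_kernel (y : 'rV[R]_n) :
  y *m L = 0 -> forall a b, y 0 a = y 0 b.
Proof.
move=> yL0.
have energy0 : \sum_a \sum_b A a b * (y 0 a - y 0 b) ^+ 2 = 0.
  by rewrite dirichlet_energyE big1 ?mulr0 // => a _; rewrite yL0 mxE mulr0.
have term_ge0 a b : 0 <= A a b * (y 0 a - y 0 b) ^+ 2.
  by rewrite mulr_ge0 ?adjmx_ge0 ?sqr_ge0.
have term0 a b : A a b * (y 0 a - y 0 b) ^+ 2 = 0.
  have row0 : \sum_b A a b * (y 0 a - y 0 b) ^+ 2 = 0.
    by apply: (psumr_eq0P _ energy0) => // a' _; apply: sumr_ge0.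
  exact: (psumr_eq0P _ row0).
have y_closed (a : 'I_n) : closed (adjacent ends) [pred k | y 0 k == y 0 a].
  move=> b c /adjmx_gt0 Abc_gt0; rewrite !inE.
  have /eqP := term0 b c.
  by rewrite mulf_eq0 gt_eqF //= sqrf_eq0 subr_eq0 => /eqP ->.
move=> a b; apply/eqP; rewrite eq_sym.
rewrite -[_ == _]/(b \in [pred k | y 0 k == y 0 a]).
by rewrite -(closed_connect (y_closed a) (G_connected a b)) inE.
Qed.

End Laplacian.

Lemma resistanceE (R : realFieldType) (n : nat) (Lp : 'M[R]_n) (i j : 'I_n) :
  let u : 'rV[R]_n := delta_mx 0 i - delta_mx 0 j in
  resistance Lp i j = (u *m Lp) 0 i - (u *m Lp) 0 j.
Proof.
move=> u; rewrite /resistance.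
have -> : (delta_mx i 0 - delta_mx j 0 : 'cV[R]_n) = u^T.
  by rewrite linearB /= !trmx_delta.
have pick (k : 'I_n) : \sum_l (u *m Lp) 0 l * (l == k)%:R = (u *m Lp) 0 k.
  by rewrite (bigD1 k) //= eqxx mulr1 big1 ?addr0 // => l /negbTE ->; rewrite mulr0.
rewrite trmxK mxE -!pick -sumrB; apply: eq_bigr => l _.
by rewrite !mxE mulrBr.
Qed.

Lemma MP_inverse_mulmx_ker (R : realFieldType) (n p : nat) (A X : 'M[R]_n)
    (v : 'M[R]_(n, p)) :
  is_MP_inverse A X -> A^T = A -> A *m v = 0 -> X *m v = 0.
Proof.
case=> _ XAX AX_sym _ A_sym Av0.
have -> : X = X *m X^T *m A by rewrite -{1}XAX -mulmxA -AX_sym trmx_mul A_sym mulmxA.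
by rewrite -mulmxA Av0 mulmx0.
Qed.

Definition pad0 (R : nmodType) (m : nat) (j : 'I_m.+2) (r : 'rV[R]_m.+1) : 'rV[R]_m.+2 :=
  \row_k (if unlift j k is Some k' then r 0 k' else 0).

Lemma pad0_at (R : nmodType) (m : nat) (j : 'I_m.+2) (r : 'rV[R]_m.+1) :
  pad0 j r 0 j = 0.
Proof. by rewrite mxE unlift_none. Qed.

Lemma pad0_lift (R : nmodType) (m : nat) (j : 'I_m.+2) (r : 'rV[R]_m.+1) k :
  pad0 j r 0 (lift j k) = r 0 k.
Proof. by rewrite mxE liftK. Qed.

Lemma sum_pad0 (R : nmodType) (m : nat) (j : 'I_m.+2) (r : 'rV[R]_m.+1) :
  \sum_k pad0 j r 0 k = \sum_k r 0 k.
Proof. by rewrite (bigD1_ord j) //= pad0_at add0r; under eq_bigr do rewrite pad0_lift. Qed.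

Lemma mulmx_pad0_lift (R : nzRingType) (m : nat) (j : 'I_m.+2)
    (r : 'rV[R]_m.+1) (A : 'M[R]_m.+2) k :
  (pad0 j r *m A) 0 (lift j k) = (r *m del_mx j A) 0 k.
Proof.
rewrite !mxE (bigD1_ord j) //= pad0_at mul0r add0r.
by apply: eq_bigr => l _; rewrite pad0_lift !mxE.
Qed.

Lemma lift_sub_idx (m : nat) (i j : 'I_m.+2) : i != j -> lift j (sub_idx j i) = i.
Proof. by rewrite /sub_idx; case: unliftP => [k -> | ->] //; rewrite eqxx. Qed.

Section GroundedInverse.
Variables (R : realFieldType) (m : nat) (E : finType).
Variables (ends : E -> 'I_m.+2 * 'I_m.+2) (w : E -> R).
Hypotheses (w_gt0 : pos_weights w) (G_connected : connected_graph ends).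

Local Notation L := (laplacian ends w).

Lemma del_laplacian_unit j : del_mx j L \in unitmx.
Proof.
rewrite unitmxE unitfE; apply/det0P => -[v v_neq0 vL0].
have off_j k : (pad0 j v *m L) 0 (lift j k) = 0 by rewrite mulmx_pad0_lift vL0 mxE.
have padL0 : pad0 j v *m L = 0.
  apply/rowP => k; rewrite [RHS]mxE; case: (unliftP j k) => [k' -> | ->]; first exact: off_j.
  have := sum_mulmx_laplacian ends w (pad0 j v).
  by rewrite (bigD1_ord j) //= big1 ?addr0.
move/eqP: v_neq0; apply; apply/rowP => k.
by rewrite mxE -(pad0_lift j v) (laplacian_left_kernel w_gt0 G_connected padL0 _ j) pad0_at.
Qed.

Lemma padded_inverse_row_potential i j (neq_ij : i != j) :
  pad0 j (row (sub_idx j i) (invmx (del_mx j L))) *m L = delta_mx 0 i - delta_mx 0 j.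
Proof.
set z := pad0 j _.
have off_j k : (z *m L) 0 (lift j k) = (lift j k == i)%:R.
  rewrite mulmx_pad0_lift -row_mul mulVmx ?del_laplacian_unit // !mxE.
  by rewrite -{2}(lift_sub_idx neq_ij) (inj_eq lift_inj) eq_sym.
apply/rowP => k; rewrite ![in RHS]mxE /=; case: (unliftP j k) => [k' -> | ->].
  by rewrite off_j [lift j k' == j]eq_sym (negbTE (neq_lift j k')) subr0.
rewrite eqxx eq_sym (negbTE neq_ij) sub0r.
have := sum_mulmx_laplacian ends w z.
rewrite (bigD1_ord j) //=; under eq_bigr do rewrite off_j.
rewrite -(lift_sub_idx neq_ij) (bigD1 (sub_idx j i)) //= eqxx big1 ?addr0.
  by move/eqP; rewrite addr_eq0 => /eqP.
by move=> l /negbTE l_neq; rewrite (inj_eq lift_inj) l_neq.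
Qed.

Lemma rowsum_del_laplacian_inv (Lp : 'M[R]_m.+2) i j :
  is_MP_inverse L Lp -> i != j ->
  let u : 'rV[R]_m.+2 := delta_mx 0 i - delta_mx 0 j in
  rowsum (invmx (del_mx j L)) (sub_idx j i) = - (m.+2)%:R * (u *m Lp) 0 j.
Proof.
move=> Lp_MP neq_ij u; have [LLpL _ _ _] := Lp_MP.
have := padded_inverse_row_potential neq_ij; rewrite -/u; set z := pad0 j _ => zL.
have shift_ker : (z - u *m Lp) *m L = 0.
  by rewrite mulmxBl -zL -!mulmxA (mulmxA L) LLpL subrr.
have z_shift k : z 0 k = (u *m Lp) 0 k - (u *m Lp) 0 j.
  have := laplacian_left_kernel w_gt0 G_connected shift_ker k j.
  rewrite [(z - _) 0 k]mxE [(z - _) 0 j]mxE [(- (u *m Lp)) 0 k]mxE [(- (u *m Lp)) 0 j]mxE pad0_at.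
  lra.
have sum_uLp0 : \sum_k (u *m Lp) 0 k = 0.
  have Lp1 := MP_inverse_mulmx_ker Lp_MP (tr_laplacian ends w) (laplacian_mul1 ends w).
  transitivity ((u *m (Lp *m const_mx 1 : 'cV_m.+2)) 0 0); last by rewrite Lp1 mulmx0 mxE.
  by rewrite mulmxA mxE; apply: eq_bigr => k _; rewrite [const_mx _ _ _]mxE mulr1.
have -> : rowsum (invmx (del_mx j L)) (sub_idx j i) = \sum_k z 0 k.
  by rewrite sum_pad0; apply: eq_bigr => l _; rewrite mxE.
under eq_bigr do rewrite z_shift.
by rewrite sumrB sum_uLp0 sumr_const card_ord sub0r mulNr mulr_natl.
Qed.

End GroundedInverse.

Theorem corollary8 (R : realFieldType) (m : nat) (E : finType)
    (ends : E -> 'I_m.+2 * 'I_m.+2) (w : E -> R)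
    (hw : pos_weights w) (hconn : connected_graph ends)
    (Lp : 'M[R]_m.+2) (hLp : is_MP_inverse (laplacian ends w) Lp)
    (i j : 'I_m.+2) (hij : i != j) :
  resistance Lp i j =
    (m.+2)%:R^-1 *
      (rowsum (invmx (del_mx j (laplacian ends w))) (sub_idx j i)
       + rowsum (invmx (del_mx i (laplacian ends w))) (sub_idx i j)).
Proof.
have hji : j != i by rewrite eq_sym.
rewrite (rowsum_del_laplacian_inv hw hconn hLp hij).
rewrite (rowsum_del_laplacian_inv hw hconn hLp hji) resistanceE.
set u : 'rV[R]_m.+2 := delta_mx 0 i - delta_mx 0 j.
have -> : (delta_mx 0 j - delta_mx 0 i : 'rV[R]_m.+2) = - u by rewrite opprB.
rewrite mulNmx [(- (u *m Lp)) 0 i]mxE.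
by field; rewrite -natrD pnatr_eq0.
Qed.
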